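(* Let $\Sigma$ be an alphabet and let $\mathcal P=(n,\Gamma,I,M,P,p_0,l)$ be a $\mathbb B\langle\Sigma\cup\{\epsilon\}\rangle$-$\omega$-pushdown automaton over $(\mathbb B\langle\langle\Sigma^*\rangle\rangle,\mathbb B\langle\langle\Sigma^\omega\rangle\rangle)$, and let $G_l$ be the mixed context-free grammar constructed from $\mathcal P$. Then $$L(G_l)=\|\mathcal P\|,$$ where $\|\mathcal P\|=I(M^* )_{p_0,\epsilon}P+I(M^{\omega,l})_{p_0}$ is identified with the set $\operatorname{supp}(I(M^* )_{p_0,\epsilon}P)\cup\operatorname{supp}(I(M^{\omega,l})_{p_0})\subseteq\Sigma^*\cup\Sigma^\omega$.
   Context: $\mathbb B=(\{0,1\},\vee,\wedge,{}^*,0,1)$ with $0^*=1^*=1$; $(\mathbb B\langle\langle\Sigma^*\rangle\rangle,\mathbb B\langle\langle\Sigma^\omega\rangle\rangle)$ (power series over finite/infinite words, identified with languages) is a complete semiring-semimodule pair (infinite sums = unions, infinite products = concatenations). $(s,a)$ is the coefficient of $a$ in $s$; $\mathbb B\langle\Sigma\cup\{\epsilon\}\rangle$ is the set of series with support in $\Sigma\cup\{\epsilon\}$. A pushdown transition matrix $M$ ($\Gamma^*\times\Gamma^*$ matrix with $n\times n$ blocks over $\mathbb B\langle\Sigma\cup\{\epsilon\}\rangle$) satisfies (i) for each $p\in\Gamma$ only finitely many blocks $M_{p,\pi}$ are nonzero, and (ii) $M_{\pi_1,\pi_2}=M_{p,\pi}$ if $\pi_1=p\pi'$, $\pi_2=\pi\pi'$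 for some $p\in\Gamma$, $\pi,\pi'\in\Gamma^*$, and $0$ otherwise. The automaton has states $1,\dots,n$, pushdown alphabet $\Gamma$, such an $M$, $I\in(\mathbb B\langle\Sigma\cup\{\epsilon\}\rangle)^{1\times n}$, $P\in(\mathbb B\langle\Sigma\cup\{\epsilon\}\rangle)^{n\times 1}$, $p_0\in\Gamma$, $l\in\{0,\dots,n\}$. $M^*=\sum_{m\ge0}M^m$ with blocks $(M^* )_{\pi,\pi'}$; with $P_l=\{(j_1,j_2,\dots)\in\{1,\dots,n\}^\omega\mid j_t\le l\text{ for infinitely many }t\}$, $((M^{\omega,l})_\pi)_i=\sum_{\pi_1,\pi_2,\ldots\in\Gamma^*}\sum_{(j_1,j_2,\ldots)\in P_l}(M_{\pi,\pi_1})_{i,j_1}(M_{\pi_1,\pi_2})_{j_1,j_2}\cdots$. The mixed context-free grammar $G_l=(X,Z,\Sigma,P_X,P_Z,x_0,z_0,l)$ has variables $X=\{x_0\}\cup\{[i,p,j]\mid 1\le i,j\le n,\ p\in\Gamma\}$, $Z=\{z_0\}\cup\{[i,p]\mid1\le i\le n,\ p\in\Gamma\}$, and productions: $P_X$: $x_0\to a_1[m_1,p_0,m_2]a_2$ whenever $(I_{m_1},a_1)\ne0$, $(P_{m_2},a_2)\ne0$, $a_1,a_2\in\Sigma\cup\{\epsilon\}$; and $[i,p,j]\to a[m_1,p_1,m_2][m_2,p_2,m_3]\cdots[m_k,p_k,j]$ whenever $k\ge0$, $p_1,\dots,p_k\in\Gamma$, $1\le m_1,\dots,m_k\le n$, $a\in\Sigma\cup\{\epsilon\}$,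 $((M_{p,p_1\dots p_k})_{i,m_1},a)\ne0$ (for $k=0$: $[i,p,j]\to a$ with $((M_{p,\epsilon})_{i,j},a)\ne0$). $P_Z$: $z_0\to a[m,p_0]$ whenever $(I_m,a)\ne0$, $a\in\Sigma\cup\{\epsilon\}$; and $[i,p]\to a[m_1,p_1,m_2]\cdots[m_{j-1},p_{j-1},m_j][m_j,p_j]$ whenever $k\ge1$, $1\le j\le k$, $p_1,\dots,p_k\in\Gamma$, $1\le m_1,\dots,m_j\le n$, $a\in\Sigma\cup\{\epsilon\}$, $((M_{p,p_1\dots p_k})_{i,m_1},a)\ne0$. An infinite derivation of $w\in\Sigma^\omega$ is a sequence $z_0\Rightarrow\alpha_0[i_0,q_0]\Rightarrow_L^*w_0[i_0,q_0]\Rightarrow w_0\alpha_1[i_1,q_1]\Rightarrow_L^*w_0w_1[i_1,q_1]\Rightarrow\cdots$ where $z_0\to\alpha_0[i_0,q_0]$ and $[i_m,q_m]\to\alpha_{m+1}[i_{m+1},q_{m+1}]$ are in $P_Z$, each $\alpha_m\Rightarrow_L^*w_m\in\Sigma^*$ is a finite leftmost derivation with $P_X$, and $w=w_0w_1\cdots$. It is a derivation $z_0\Rightarrow_L^{\omega,l}w$ if, with $i_m^1,\dots,i_m^{t_m}$ the first components of the triple variables rewritten (in order) in $\alpha_m\Rightarrow_L^*w_m$, the sequence $i_0,i_1^1,\dots,i_1^{t_1},i_1,i_2^1,\dots,i_2^{t_2},i_2,\dots$ lies in $P_l$. $L(G_l)=\{w\in\Sigma^*\mid x_0\Rightarrow_L^*w\}\cup\{w\in\Sigma^\omega\mid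 z_0\Rightarrow_L^{\omega,l}w\}$. *)

From mathcomp Require Import all_boot.
Set Implicit Arguments. Unset Strict Implicit. Unset Printing Implicit Defensive.

(* Sigma^{Sigma-or-epsilon} letters are [option Sigma] (None = epsilon).
   Finite words are [seq Sigma]; infinite words are [nat -> Sigma]. *)

Definition oword (S : Type) (a : option S) : seq S :=
  if a is Some x then [:: x] else [::].

Definition cat_upto (T : Type) (u : nat -> seq T) (m : nat) : seq T :=
  flatten [seq u i | i <- iota 0 m].

(* [omega_concat u w]: the infinite concatenation u 0 u 1 u 2 ... is the
   infinite word w (every finite partial concatenation is a prefix of w,
   and the partial concatenations have unbounded length). *)
Definition omega_concat (T : Type) (u : nat -> seq T) (w : nat -> T) : Prop :=
  (forall m, cat_upto u m = mkseq w (size (cat_upto u m))) /\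
  (forall N, exists m, N <= size (cat_upto u m)).

Inductive word (S : Type) := FinW of seq S | InfW of nat -> S.
Arguments FinW {S}. Arguments InfW {S}.

(* States 1..n are represented by 'I_n (state k+1 <-> ordinal k).
   Entries of B<Sigma u {eps}> are boolean predicates on option Sigma.
   pM p pi = the block M_{p,pi}. *)
Record pda (Sigma Gamma : finType) := Pda {
  nst : nat;
  pI : 'I_nst -> option Sigma -> bool;
  pM : Gamma -> seq Gamma -> 'I_nst -> 'I_nst -> option Sigma -> bool;
  pP : 'I_nst -> option Sigma -> bool;
  p0 : Gamma;
  lacc : nat }.
Arguments nst {Sigma Gamma}. Arguments pI {Sigma Gamma}. Arguments pM {Sigma Gamma}.
Arguments pP {Sigma Gamma}. Arguments p0 {Sigma Gamma}. Arguments lacc {Sigma Gamma}.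

Definition pda_wf (Sigma Gamma : finType) (A : pda Sigma Gamma) : Prop :=
  (forall p : Gamma, exists s : seq (seq Gamma),
      forall pi i j a, pM A p pi i j a -> pi \in s) /\
  lacc A <= nst A.

Section Automaton.
Variables (Sigma Gamma : finType) (A : pda Sigma Gamma).
Local Notation n := (nst A).

Definition Mfull (pi1 pi2 : seq Gamma) (i j : 'I_n) (a : option Sigma) : Prop :=
  exists p pi pi', pi1 = p :: pi' /\ pi2 = pi ++ pi' /\ pM A p pi i j a.

Definition beh_fin (w : seq Sigma) : Prop :=
  exists (k : nat) (st : nat -> seq Gamma) (q : nat -> 'I_n)
         (b : nat -> option Sigma) (a1 a2 : option Sigma),
    pI A (q 0) a1 /\ st 0 = [:: p0 A] /\ st k = [::] /\ pP A (q k) a2 /\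
    (forall t, t < k -> Mfull (st t) (st t.+1) (q t) (q t.+1) (b t)) /\
    w = oword a1 ++ flatten [seq oword (b t) | t <- iota 0 k] ++ oword a2.

(* supp (I (M^{omega,l})_{p0}): q 0 = i, q 1 = j_1, q 2 = j_2, ...;
   P_l condition: j_t <= l (1-based) i.e. (q t : nat) < l, infinitely often. *)
Definition beh_inf (w : nat -> Sigma) : Prop :=
  exists (a : option Sigma) (st : nat -> seq Gamma) (q : nat -> 'I_n)
         (b : nat -> option Sigma),
    pI A (q 0) a /\ st 0 = [:: p0 A] /\
    (forall t, Mfull (st t) (st t.+1) (q t) (q t.+1) (b t)) /\
    (forall N, exists t, N < t /\ q t < lacc A) /\
    omega_concat (fun t => if t is t'.+1 then oword (b t') else oword a) w.

Definition behaviour (w : word Sigma) : Prop :=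
  match w with FinW u => beh_fin u | InfW v => beh_inf v end.
End Automaton.

Inductive xvar (n : nat) (Gamma : Type) :=
  | X0 : xvar n Gamma
  | XT : 'I_n -> Gamma -> 'I_n -> xvar n Gamma.
Inductive zvar (n : nat) (Gamma : Type) :=
  | Z0 : zvar n Gamma
  | ZT : 'I_n -> Gamma -> zvar n Gamma.
Inductive sym (Sigma : Type) (n : nat) (Gamma : Type) :=
  | Ter : Sigma -> sym Sigma n Gamma
  | NT : xvar n Gamma -> sym Sigma n Gamma.
Arguments X0 {n Gamma}. Arguments XT {n Gamma}.
Arguments Z0 {n Gamma}. Arguments ZT {n Gamma}.
Arguments Ter {Sigma n Gamma}. Arguments NT {Sigma n Gamma}.

Fixpoint chainX (n : nat) (Gamma : Type) (ms : seq 'I_n) (ps : seq Gamma)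
  (j : 'I_n) : seq (xvar n Gamma) :=
  match ms, ps with
  | m :: ms', p :: ps' => XT m p (head j ms') :: chainX ms' ps' j
  | _, _ => [::]
  end.

Definition firstc (n : nat) (Gamma : Type) (x : xvar n Gamma) : seq 'I_n :=
  match x with X0 => [::] | XT i _ _ => [:: i] end.

Section Grammar.
Variables (Sigma Gamma : finType) (A : pda Sigma Gamma).
Local Notation n := (nst A).
Local Notation symb := (sym Sigma n Gamma).

Definition oterm (a : option Sigma) : seq symb := map Ter (oword a).

Definition prodX (x : xvar n Gamma) (beta : seq symb) : Prop :=
  match x with
  | X0 => exists (m1 m2 : 'I_n) a1 a2,
      pI A m1 a1 /\ pP A m2 a2 /\
      beta = oterm a1 ++ NT (XT m1 (p0 A) m2) :: oterm a2
  | XT i p j => exists a (ms : seq 'I_n) (ps : seq Gamma),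
      size ms = size ps /\ pM A p ps i (head j ms) a /\
      beta = oterm a ++ map NT (chainX ms ps j)
  end.

Definition prodZ (z : zvar n Gamma) (beta : seq symb) (z' : zvar n Gamma) : Prop :=
  match z with
  | Z0 => exists (m : 'I_n) a, pI A m a /\ beta = oterm a /\ z' = ZT m (p0 A)
  | ZT i p => exists a (ms1 : seq 'I_n) (ps1 : seq Gamma) (mj : 'I_n) (pj : Gamma)
                     (ps2 : seq Gamma),
      size ms1 = size ps1 /\ pM A p (ps1 ++ pj :: ps2) i (head mj ms1) a /\
      beta = oterm a ++ map NT (chainX ms1 ps1 mj) /\ z' = ZT mj pj
  end.

Definition lstep (alpha beta : seq symb) (r : seq 'I_n) : Prop :=
  exists (u : seq Sigma) (x : xvar n Gamma) (gamma delta : seq symb),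
    alpha = map Ter u ++ NT x :: gamma /\ prodX x delta /\
    beta = map Ter u ++ delta ++ gamma /\ r = firstc x.

Inductive lderiv : seq symb -> seq symb -> seq 'I_n -> Prop :=
  | lderiv_refl alpha : lderiv alpha alpha [::]
  | lderiv_step alpha beta gamma r s :
      lstep alpha beta r -> lderiv beta gamma s -> lderiv alpha gamma (r ++ s).

Definition gram_fin (w : seq Sigma) : Prop :=
  exists s, lderiv [:: NT X0] (map Ter w) s.

Definition gram_inf (w : nat -> Sigma) : Prop :=
  exists (alpha : nat -> seq symb) (iz : nat -> 'I_n) (qz : nat -> Gamma)
         (wd : nat -> seq Sigma) (s : nat -> seq 'I_n) (jseq : nat -> 'I_n),
    prodZ Z0 (alpha 0) (ZT (iz 0) (qz 0)) /\
    (forall m, prodZ (ZT (iz m) (qz m)) (alpha m.+1) (ZT (iz m.+1) (qz m.+1))) /\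
    (forall m, lderiv (alpha m) (map Ter (wd m)) (s m)) /\
    omega_concat wd w /\
    omega_concat (fun m => if m is m'.+1 then s m ++ [:: iz m] else [:: iz 0]) jseq /\
    (forall N, exists t, N <= t /\ jseq t < lacc A).

Definition gram_lang (w : word Sigma) : Prop :=
  match w with FinW u => gram_fin u | InfW v => gram_inf v end.
End Grammar.

(* For finite words, a leftmost derivation from a triple variable [i,p,j] is
   the same as a run that starts in state i with stack p and empties its stack
   in state j: the production used first performs the first transition, pushing
   p1...pk, and the variables [m1,p1,m2]...[mk,pk,j] pop these symbols one after
   another.
   For infinite words, cut an infinite run at its low points, the times after
   which the stack never gets lower.  If t < t1 are consecutive low points and
   the transition at t replaces p by p1...pk, then the stack at t1 is pj...pk
   followed by the stack below p, and in between the run only pops p1...p(j-1);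
   so the segment is derived from [q t, p] -> b [m1,p1,m2]...[mj,pj].
   Conversely, the runs given by the segments of a derivation join into an
   infinite run whose states are exactly the first components that the
   derivation records, so the two acceptance conditions agree. *)

From mathcomp Require Import all_boot zify.
From Stdlib Require Import Classical IndefiniteDescription.
Set Implicit Arguments. Unset Strict Implicit. Unset Printing Implicit Defensive.

Lemma ex_minimal (P : nat -> Prop) :
  (exists k, P k) -> exists k, P k /\ forall k', P k' -> k <= k'.
Proof.
move=> [k]; elim/ltn_ind: k => k IH Pk.
have [[k' [Pk' lt_k'k]] | no_smaller] := classic (exists k', P k' /\ k' < k).
  exact: IH Pk'.
exists k; split=> // k' Pk'; rewrite leqNgt; apply/negP => lt_k'k.
by apply: no_smaller; exists k'.
Qed.

Lemma first_min_after (h : nat -> nat) t : exists t1,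
  [/\ t < t1, forall t', t < t' -> h t1 <= h t' & forall t', t < t' < t1 -> h t1 < h t'].
Proof.
have [hm [[t0 [lt_tt0 <-]] hm_min]] :=
  ex_minimal (ex_intro (fun k => exists t', t < t' /\ h t' = k) _
                       (ex_intro _ t.+1 (conj (ltnSn t) erefl))).
have [t1 [[lt_tt1 Eh1] t1_min]] :=
  ex_minimal (ex_intro (fun t' => t < t' /\ h t' = h t0) _ (conj lt_tt0 erefl)).
have h_ge t' : t < t' -> h t0 <= h t' by move=> lt_tt'; apply: hm_min; exists t'.
exists t1; split=> // [t' /h_ge | t' /andP[lt_tt' lt_t't1]]; rewrite Eh1 //.
rewrite ltn_neqAle h_ge // andbT; apply/eqP => Eh.
by have := t1_min t' (conj lt_tt' (esym Eh)); rewrite leqNgt lt_t't1.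
Qed.

Lemma cat_eq_split (T : Type) (x S pi R : seq T) :
  x ++ S = pi ++ R -> size R < size S -> exists S', S = S' ++ R /\ pi = x ++ S'.
Proof.
elim: pi x => [|c pi IH] [|d x] /= E ltRS.
- by rewrite E ltnn in ltRS.
- by rewrite -E /= size_cat ltnNge leqW ?leq_addl in ltRS.
- by exists (c :: pi); rewrite E.
- by case: E => -> /IH [//| S' [-> ->]]; exists S'.
Qed.

(** * Infinite concatenations *)

Definition scons (T : Type) (x : T) (u : nat -> T) (t : nat) : T :=
  if t is t'.+1 then u t' else x.

Definition blocks (T : Type) (u : nat -> T) (f : nat -> nat) (m : nat) : seq T :=
  [seq u t | t <- iota (f m) (f m.+1 - f m)].

Lemma map_iota_succ (T : Type) (F G : nat -> T) a k :
  (forall t, F t.+1 = G t) -> [seq F t | t <- iota a.+1 k] = [seq G t | t <- iota a k].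
Proof. by move=> FG; elim: k a => //= k IH a; rewrite FG IH. Qed.

Lemma blocksE (T : Type) (u : nat -> T) f m : f m < f m.+1 ->
  blocks u f m = u (f m) :: [seq u t | t <- iota (f m).+1 (f m.+1 - (f m).+1)].
Proof. by move=> lt_f; rewrite /blocks -(subnSK lt_f). Qed.

Section OmegaConcat.
Variable T : Type.
Implicit Types (u v : nat -> seq T) (w : nat -> T).

Lemma cat_uptoD u m d :
  cat_upto u (m + d) = cat_upto u m ++ flatten [seq u i | i <- iota m d].
Proof. by rewrite /cat_upto iotaD map_cat flatten_cat. Qed.

Lemma cat_uptoS u m : cat_upto u m.+1 = cat_upto u m ++ u m.
Proof. by rewrite -addn1 cat_uptoD /= cats0. Qed.

Lemma cat_upto_prefix u m m' : m <= m' -> exists L, cat_upto u m' = cat_upto u m ++ L.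
Proof. by move/subnKC <-; rewrite cat_uptoD; eexists. Qed.

Lemma eq_cat_upto u v : u =1 v -> cat_upto u =1 cat_upto v.
Proof. by move=> Euv m; rewrite /cat_upto (eq_map Euv). Qed.

Lemma cat_upto_scons x u m : cat_upto (scons x u) m.+1 = x ++ cat_upto u m.
Proof. by rewrite /cat_upto /= (map_iota_succ (G := u)). Qed.

Lemma size_cat_upto u m : (forall t, 0 < size (u t)) -> m <= size (cat_upto u m).
Proof.
move=> u_gt0; elim: m => // m IH.
by rewrite cat_uptoS size_cat -addn1 leq_add.
Qed.

Lemma omega_concat_prefix u w k L L' :
  omega_concat u w -> cat_upto u k = L ++ L' -> L = mkseq w (size L).
Proof.
move=> [w_pre _] Ek; have := congr1 (take (size L)) (w_pre k).
by rewrite Ek take_size_cat // -map_take take_iota size_cat (minn_idPl (leq_addr _ _)).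
Qed.

Lemma omega_concat_nth d u w k L L' t :
  omega_concat u w -> cat_upto u k = L ++ L' -> t < size L -> nth d L t = w t.
Proof. by move=> uw /(omega_concat_prefix uw) EL lt_t; rewrite EL nth_mkseq. Qed.

Lemma omega_concat_uniq u w1 w2 : omega_concat u w1 -> omega_concat u w2 -> w1 =1 w2.
Proof.
move=> uw1 uw2 t; have [m lt_t] := uw1.2 t.+1.
rewrite -(omega_concat_nth (w1 t) uw1 (esym (cats0 _)) lt_t).
exact: (omega_concat_nth _ uw2 (esym (cats0 _)) lt_t).
Qed.

Lemma omega_concat_cofinal u v w :
  omega_concat u w ->
  (forall m, exists k L, cat_upto v m ++ L = cat_upto u k) ->
  (forall k, exists m L, cat_upto u k ++ L = cat_upto v m) ->
  omega_concat v w.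
Proof.
move=> uw vu uv; split=> [m | N].
  by have [k [L Ek]] := vu m; apply: (omega_concat_prefix uw (esym Ek)).
have [k le_Nk] := uw.2 N; have [m [L Em]] := uv k.
by exists m; rewrite -Em size_cat (leq_trans le_Nk) ?leq_addr.
Qed.

Lemma eq_omega_concat u v w : omega_concat u w -> u =1 v -> omega_concat v w.
Proof.
move=> uw Euv; apply: (omega_concat_cofinal uw) => m;
  by exists m, [::]; rewrite cats0 (eq_cat_upto Euv).
Qed.

Lemma omega_concat_scons u w a :
  omega_concat u w -> omega_concat (scons [:: a] u) (scons a w).
Proof.
move=> [w_pre w_unb]; split=> [[|m] | N]; rewrite ?cat_upto_scons //.
  by rewrite [in LHS]w_pre /mkseq /= (map_iota_succ (G := w)).
have [m le_Nm] := w_unb N; exists m.+1.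
by rewrite cat_upto_scons (leq_trans le_Nm).
Qed.

Lemma omega_concat_rotate (x : nat -> T) (y : nat -> seq T) w :
  omega_concat (fun m => x m :: y m) w ->
  omega_concat (scons [:: x 0] (fun m => y m ++ [:: x m.+1])) w.
Proof.
set Q := fun m => _; set J := scons _ _ => Qw.
have EJ m : cat_upto J m.+1 = cat_upto Q m ++ [:: x m].
  by elim: m => // m IH; rewrite cat_uptoS IH cat_uptoS -!catA.
apply: (omega_concat_cofinal Qw) => [[|m] | m]; first by exists 0, [::].
  by exists m.+1, (y m); rewrite EJ cat_uptoS -catA.
by exists m.+1, [:: x m]; rewrite EJ.
Qed.

Lemma omega_concat_glue (d : T) u : (forall m, 0 < size (u m)) ->
  omega_concat u (fun t => nth d (cat_upto u t.+1) t).
Proof.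
move=> u_gt0; split=> [m | N]; last by exists N; apply: size_cat_upto.
apply: (@eq_from_nth _ d); first by rewrite size_mkseq.
move=> i lt_im; rewrite nth_mkseq //.
have [L1 E1] := cat_upto_prefix u (leq_maxl m i.+1).
have [L2 E2] := cat_upto_prefix u (leq_maxr m i.+1).
have lt_i : i < size (cat_upto u i.+1) by apply: size_cat_upto.
by have := congr1 (nth d ^~ i) (etrans (esym E1) E2); rewrite !nth_cat lt_im lt_i.
Qed.

End OmegaConcat.

Lemma omega_concat_map (T U : Type) (h : T -> U) (u : nat -> seq T) w :
  omega_concat u w -> omega_concat (fun m => map h (u m)) (fun t => h (w t)).
Proof.
have E m : cat_upto (fun m => map h (u m)) m = map h (cat_upto u m).
  by rewrite /cat_upto map_flatten -map_comp.
move=> [w_pre w_unb]; split=> [m | N]; first by rewrite E size_map {1}w_pre /mkseq -map_comp.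
by have [m le_Nm] := w_unb N; exists m; rewrite E size_map.
Qed.

Lemma omega_concat_flatten (T : Type) (W : nat -> seq (seq T)) v {w : nat -> T} :
  (forall m, 0 < size (W m)) -> omega_concat W v ->
  omega_concat (fun m => flatten (W m)) w <-> omega_concat v w.
Proof.
move=> W_gt0 [v_pre _].
have E m : cat_upto (fun m => flatten (W m)) m = cat_upto v (size (cat_upto W m)).
  have -> : cat_upto (fun m => flatten (W m)) m = flatten (cat_upto W m).
    by elim: m => // m IH; rewrite !cat_uptoS IH flatten_cat.
  by rewrite {1}v_pre.
have fwd m : exists k L, cat_upto (fun m => flatten (W m)) m ++ L = cat_upto v k.
  by exists (size (cat_upto W m)), [::]; rewrite cats0 E.
have bwd k : exists m L, cat_upto v k ++ L = cat_upto (fun m => flatten (W m)) m.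
  have [L EL] := cat_upto_prefix v (size_cat_upto k W_gt0).
  by exists k, L; rewrite E EL.
by split=> uw; apply: omega_concat_cofinal uw _ _.
Qed.

Lemma omega_concat_blocks (T : Type) (u : nat -> T) (f : nat -> nat) :
  f 0 = 0 -> (forall m, f m < f m.+1) -> omega_concat (blocks u f) u.
Proof.
move=> f0 f_lt.
have E m : cat_upto (blocks u f) m = mkseq u (f m).
  elim: m => [|m IH]; first by rewrite f0.
  by rewrite cat_uptoS IH /blocks /mkseq -map_cat -iotaD subnKC // ltnW.
have le_f m : m <= f m by elim: m => // m IH; apply: leq_ltn_trans IH (f_lt m).
split=> [m | N]; first by rewrite E size_mkseq.
by exists N; rewrite E size_mkseq.
Qed.

(** * Leftmost derivations and runs *)

Section Automaton.
Variables (Sigma Gamma : finType) (A : pda Sigma Gamma).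
Local Notation n := (nst A).
Local Notation symb := (sym Sigma n Gamma).
Local Notation MF := (@Mfull _ _ A).
Local Notation prodX := (@prodX _ _ A).
Local Notation prodZ := (@prodZ _ _ A).
Local Notation lstep := (@lstep _ _ A).
Local Notation lderiv := (@lderiv _ _ A).

Lemma map_Ter_inj : injective (map (@Ter Sigma n Gamma)).
Proof. by apply: inj_map => x y []. Qed.

Lemma map_Ter_NT_inj u u' (x x' : xvar n Gamma) (g g' : seq symb) :
  map Ter u ++ NT x :: g = map Ter u' ++ NT x' :: g' -> [/\ u = u', x = x' & g = g'].
Proof.
elim: u u' => [|a u IH] [|a' u'] //= [].
- by move=> -> ->.
- by move=> -> /IH [-> -> ->].
Qed.

Lemma map_Ter_neq_NT w u (x : xvar n Gamma) (g : seq symb) :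
  map Ter w <> map Ter u ++ NT x :: g.
Proof. by elim: u w => [|a u IH] [|c w] //= [_ /IH]. Qed.

Lemma chainX_cat (ms1 ms2 : seq 'I_n) (ps1 ps2 : seq Gamma) j :
  size ms1 = size ps1 ->
  chainX ms1 ps1 (head j ms2) ++ chainX ms2 ps2 j = chainX (ms1 ++ ms2) (ps1 ++ ps2) j.
Proof.
elim: ms1 ps1 => [|m ms1 IH] [|p ps1] //= [size_eq].
by rewrite IH //; case: ms1 {IH} size_eq.
Qed.

Lemma chainX_eq_nil (ms : seq 'I_n) (ps : seq Gamma) j :
  size ms = size ps -> chainX ms ps j = [::] -> ms = [::] /\ ps = [::].
Proof. by case: ms ps => [|m ms] [|p ps]. Qed.

Lemma lstep_prodX x delta : prodX x delta -> lstep [:: NT x] delta (firstc x).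
Proof. by exists [::], x, [::], delta; rewrite cats0. Qed.

Lemma lstep_frame alpha beta r u g :
  lstep alpha beta r -> lstep (map Ter u ++ alpha ++ g) (map Ter u ++ beta ++ g) r.
Proof.
move=> [u' [x [gamma [delta [-> [prod_x [-> ->]]]]]]].
by exists (u ++ u'), x, (gamma ++ g), delta; rewrite map_cat -!catA.
Qed.

Lemma lderiv_frame alpha beta s u g :
  lderiv alpha beta s -> lderiv (map Ter u ++ alpha ++ g) (map Ter u ++ beta ++ g) s.
Proof.
elim=> [alpha' | ? ? ? r ? step _ IH]; first exact: lderiv_refl.
exact: lderiv_step (lstep_frame u g step) IH.
Qed.

Lemma lderiv_trans a b c s1 s2 :
  lderiv a b s1 -> lderiv b c s2 -> lderiv a c (s1 ++ s2).
Proof.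
elim=> // a' b' c' r s step _ IH /IH der.
by rewrite -catA; apply: lderiv_step step der.
Qed.

Lemma lderiv_cat a b w1 w2 s1 s2 :
  lderiv a (map Ter w1) s1 -> lderiv b (map Ter w2) s2 ->
  lderiv (a ++ b) (map Ter (w1 ++ w2)) (s1 ++ s2).
Proof.
move=> /(lderiv_frame [::] b) der1 /(lderiv_frame w1 [::]) der2.
by rewrite map_cat; apply: lderiv_trans der1 _; rewrite !cats0 in der2.
Qed.

Lemma lderiv_terminal u beta s :
  lderiv (map Ter u) beta s -> beta = map Ter u /\ s = [::].
Proof.
move Eal: (map Ter u) => al der; case: der Eal => [? <- //| ? ? ? ? ? step _ Eal].
by case: step => [u' [x [g [d [E _]]]]]; rewrite E in Eal; case: (map_Ter_neq_NT Eal).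
Qed.

Lemma lderiv_NT x w s : lderiv [:: NT x] (map Ter w) s ->
  exists delta s', [/\ prodX x delta, lderiv delta (map Ter w) s' & s = firstc x ++ s'].
Proof.
move Eal: [:: NT x] => al; move Ebe: (map Ter w) => be der.
case: der Eal Ebe => [? <- E | ? ? ? ? s' [u [x' [g [d [-> [prod_x' [-> ->]]]]]]] der].
  by case: (map_Ter_neq_NT (u := [::]) (g := [::]) E).
case: u der => [|? ? //] /= der [Ex Eg] Ew; subst.
by exists d, s'; rewrite cats0 in der.
Qed.

(* [s] lists the states that the run leaves, in the order in which a leftmost
   derivation records the first components of its triple variables. *)
Inductive run : 'I_n -> seq Gamma -> 'I_n -> seq Gamma -> seq Sigma -> seq 'I_n -> Prop :=
  | run0 i st : run i st i st [::] [::]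
  | runS i st i1 st1 a j st2 v s :
      MF st st1 i i1 a -> run i1 st1 j st2 v s -> run i st j st2 (oword a ++ v) (i :: s).

Lemma Mfull_catr x y i j a R : MF x y i j a -> MF (x ++ R) (y ++ R) i j a.
Proof. by move=> [p [pi [pi' [-> [-> M]]]]]; exists p, pi, (pi' ++ R); rewrite catA. Qed.

Lemma run_catr i st j st' v s R :
  run i st j st' v s -> run i (st ++ R) j (st' ++ R) v s.
Proof.
elim=> [? ? | ? ? ? ? ? ? ? ? ? /(Mfull_catr R) step _ r]; first exact: run0.
exact: runS step r.
Qed.

Lemma run_nil_stack i j st' v s :
  run i [::] j st' v s -> [/\ i = j, st' = [::], v = [::] & s = [::]].
Proof.
move E: [::] => st r; case: r E => // ? ? ? ? ? ? ? ? ? [p [pi [pi' [Est _]]]].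
by rewrite Est.
Qed.

Lemma run_pop i p k v s : run i [:: p] k [::] v s ->
  exists i1 pi a v' s',
    [/\ pM A p pi i i1 a, run i1 pi k [::] v' s', v = oword a ++ v' & s = i :: s'].
Proof.
move E: [:: p] => st; move E': [::] => st' r.
case: r E E' => [? ? <- //| ? ? i1 ? a ? ? v' s' [p' [pi [pi' [-> [-> M]]]]] r].
move=> [Ep Epi'] Est2; subst.
by exists i1, pi, a, v', s'; rewrite cats0 in r.
Qed.

Lemma run_split_stack x pi i j v s : run i (x ++ pi) j [::] v s ->
  exists k v1 v2 s1 s2,
    [/\ run i x k [::] v1 s1, run k pi j [::] v2 s2, v = v1 ++ v2 & s = s1 ++ s2].
Proof.
move E: (x ++ pi) => st; move E': [::] => st' r.
elim: r x E E' => [i0 st0 | i0 st0 i1 st1 a j0 st2 v0 s0 step r IH] [|p x] //= Est Est'.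
- by subst; exists i0, [::], [::], [::], [::]; split; try exact: run0.
- by rewrite -Est' in Est.
- subst; exists i0, [::], (oword a ++ v0), [::], (i0 :: s0).
  by split; [apply: run0 | apply: runS step r |..].
- move: step => [p' [pi0 [pi' [Est0 [Est1 M]]]]].
  rewrite -Est in Est0; case: Est0 => Ep Epi'; subst p' pi' st1.
  have [k [v1 [v2 [s1 [s2 [r1 r2 -> ->]]]]]] := IH (pi0 ++ x) (esym (catA _ _ _)) Est'.
  exists k, (oword a ++ v1), v2, (i0 :: s1), s2; split; rewrite ?catA //.
  by apply: runS r1; exists p, pi0, x.
Qed.

Lemma lderiv_chain_run alpha beta s u ms ps j z w :
  lderiv alpha beta s -> size ms = size ps ->
  alpha = map Ter u ++ map NT (chainX ms ps j) ++ map Ter z -> beta = map Ter w ->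
  exists v, w = u ++ v ++ z /\ run (head j ms) ps j [::] v s.
Proof.
move=> der; elim: der u ms ps => [al | al be ga r' s' step _ IH] u ms ps size_eq Eal Ebe.
  rewrite Eal in Ebe; case Ech: (chainX ms ps j) => [|x rest] in Ebe *.
    have [-> ->] := chainX_eq_nil size_eq Ech.
    rewrite -map_cat in Ebe; exists [::].
    by rewrite (map_Ter_inj Ebe); split; last apply: run0.
  by case: (map_Ter_neq_NT (esym Ebe)).
move: step => [u' [x [g [d [E [prod_x [Ebe' ->]]]]]]]; rewrite {al}Eal in E.
case: ms ps size_eq E => [|m1 ms] [|p1 ps] //= => [_ | [size_eq]] E.
  by rewrite -map_cat in E; case: (map_Ter_neq_NT E).
have [Eu Ex Eg] := map_Ter_NT_inj E; subst u' x g.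
move: prod_x => [a [ms0 [ps0 [size_eq0 [M Ed]]]]].
have size_cat_eq : size (ms0 ++ ms) = size (ps0 ++ ps).
  by rewrite !size_cat size_eq0 size_eq.
have [|v [-> r]] := IH (u ++ oword a) _ _ size_cat_eq _ Ebe.
  by rewrite Ebe' Ed /oterm -chainX_cat // !map_cat -!catA.
exists (oword a ++ v); split; first by rewrite -!catA.
apply: runS r; exists p1, ps0, ps; split=> //.
by case: ms0 M {size_eq0 Ed size_cat_eq}.
Qed.

Lemma run_lderiv_chain i ps j v s : run i ps j [::] v s ->
  exists ms, [/\ size ms = size ps, head j ms = i &
                 lderiv (map NT (chainX ms ps j)) (map Ter v) s].
Proof.
have [N] := ubnP (size s); elim: N => // N IH in i ps j v s *.
case: ps => [|p pi] lt_sN r.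
  have [-> _ -> ->] := run_nil_stack r.
  by exists [::]; split=> //; apply: lderiv_refl.
(* [k] is the state in which [p] is popped. *)
have [k [v1 [v2 [s1 [s2 [r1 r2 Ev Es]]]]]] := run_split_stack (x := [:: p]) r.
have [i1 [pi0 [a [v1' [s1' [M r1' Ev1 Es1]]]]]] := run_pop r1.
have lt_s1' : size s1' < N by move: lt_sN; rewrite Es Es1 size_cat /=; lia.
have lt_s2 : size s2 < N by move: lt_sN; rewrite Es Es1 size_cat /=; lia.
have [ms0 [size_ms0 head_ms0 der1]] := IH _ _ _ _ _ lt_s1' r1'.
have [ms2 [size_ms2 head_ms2 der2]] := IH _ _ _ _ _ lt_s2 r2.
exists (i :: ms2); split; [by rewrite /= size_ms2 | by [] |].
rewrite /= head_ms2 Ev Ev1 Es Es1 -cat1s -[NT _ :: _]cat1s; apply: lderiv_cat der2.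
apply: (lderiv_step (r := [:: i])).
  by apply: (lstep_prodX (x := XT i p k)); exists a, ms0, pi0; rewrite head_ms0.
by have := lderiv_frame (oword a) [::] der1; rewrite !cats0 map_cat.
Qed.

Lemma run_iota (st : nat -> seq Gamma) (q : nat -> 'I_n) (b : nat -> option Sigma) a k :
  (forall t, t < k -> MF (st (a + t)) (st (a + t).+1) (q (a + t)) (q (a + t).+1) (b (a + t))) ->
  run (q a) (st a) (q (a + k)) (st (a + k))
      (flatten [seq oword (b t) | t <- iota a k]) [seq q t | t <- iota a k].
Proof.
elim: k a => [|k IH] a steps; first by rewrite addn0; apply: run0.
apply: (runS (i1 := q a.+1) (st1 := st a.+1)); first by have := steps 0 isT; rewrite addn0.
by rewrite -addSnnS; apply: IH => t lt_tk; rewrite addSnnS; apply: steps.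
Qed.

Lemma run_indexed i st j st' v s : run i st j st' v s ->
  exists k (stf : nat -> seq Gamma) (qf : nat -> 'I_n) (bf : nat -> option Sigma),
    [/\ stf 0 = st, qf 0 = i, stf k = st', qf k = j &
        [/\ forall t, t < k -> MF (stf t) (stf t.+1) (qf t) (qf t.+1) (bf t),
            v = flatten [seq oword (bf t) | t <- iota 0 k] &
            s = [seq qf t | t <- iota 0 k]]].
Proof.
elim=> [i0 st0 | i0 st0 i1 st1 a j0 st2 v0 s0 step _ IH].
  by exists 0, (fun=> st0), (fun=> i0), (fun=> None).
have [k [stf [qf [bf [E0 Eq0 Ek Eqk [steps -> ->]]]]]] := IH.
exists k.+1, (scons st0 stf), (scons i0 qf), (scons a bf); split=> //; split.
- by case=> [_|t /steps] //=; rewrite E0 Eq0.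
- by rewrite /= (map_iota_succ (G := fun t => oword (bf t))).
- by rewrite /= (map_iota_succ (G := qf)).
Qed.

Lemma gram_fin_beh_fin w : gram_fin A w -> beh_fin A w.
Proof.
move=> [s /lderiv_NT [_ [s' [[m1 [m2 [a1 [a2 [HI [HP ->]]]]]] der _]]]].
have [v [-> r]] := lderiv_chain_run (u := oword a1) (ms := [:: m1]) (ps := [:: p0 A])
                     (j := m2) (z := oword a2) der erefl erefl erefl.
have [k [st [q [b [E0 Eq0 Ek Eqk [steps -> _]]]]]] := run_indexed r.
by exists k, st, q, b, a1, a2; rewrite Eq0 Eqk.
Qed.

Lemma beh_fin_gram_fin w : beh_fin A w -> gram_fin A w.
Proof.
move=> [k [st [q [b [a1 [a2 [HI [E0 [Ek [HP [steps ->]]]]]]]]]]].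
have := run_iota (a := 0) steps; rewrite /= E0 Ek => r.
have [[|m [|? ?]] [//= _ Em der]] := run_lderiv_chain r.
rewrite Em in der.
exists ([::] ++ [seq q t | t <- iota 0 k]).
apply: lderiv_step (lstep_prodX (x := X0) _) _; first by exists (q 0), (q k), a1, a2.
by rewrite !map_cat; exact: (lderiv_frame (oword a1) (oterm A a2) der).
Qed.

(** * Infinite words *)

Lemma prodZ0_lderiv alpha i p v s :
  prodZ Z0 alpha (ZT i p) -> lderiv alpha (map Ter v) s ->
  exists a, [/\ pI A i a, p = p0 A, v = oword a & s = [::]].
Proof.
move=> [m [a [HI [-> [-> ->]]]]] der.
by have [/map_Ter_inj -> ->] := lderiv_terminal (u := oword a) der; exists a.
Qed.

Lemma prodZ_lderiv_run i p i' p' alpha v s :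
  prodZ (ZT i p) alpha (ZT i' p') -> lderiv alpha (map Ter v) s ->
  exists P, forall R, run i (p :: R) i' (p' :: P ++ R) v (i :: s).
Proof.
move=> [a [ms [ps [mj [pj [ps2 [size_eq [M [Eal [-> ->]]]]]]]]]] der.
have [|v' [-> r]] := lderiv_chain_run (u := oword a) (j := mj) (z := [::]) der size_eq _ erefl.
  by rewrite Eal cats0.
exists ps2 => R; rewrite cats0.
apply: runS (run_catr (pj :: ps2 ++ R) r).
by exists p, (ps ++ pj :: ps2), R; rewrite -catA.
Qed.

Definition conf := (seq Gamma * 'I_n)%type.

Definition head_conf (l : seq (conf * option Sigma)) (c : conf) : conf := (head (c, None) l).1.

Fixpoint trace (l : seq (conf * option Sigma)) (c : conf) : Prop :=
  if l is (c0, a) :: l' then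
    let c1 := head_conf l' c in MF c0.1 c1.1 c0.2 c1.2 a /\ trace l' c
  else True.

Lemma head_conf_cat l1 l2 c : head_conf (l1 ++ l2) c = head_conf l1 (head_conf l2 c).
Proof. by case: l1. Qed.

Lemma trace_cat l1 l2 c c' :
  trace l1 c -> trace l2 c' -> head_conf l2 c' = c -> trace (l1 ++ l2) c'.
Proof.
elim: l1 => [|[c0 a] l1 IH] //= [step tr1] tr2 E; split; last exact: IH.
by rewrite head_conf_cat E.
Qed.

Lemma trace_nth d l c t : trace l c -> t.+1 < size l ->
  let: (c0, a) := nth d l t in let c1 := (nth d l t.+1).1 in MF c0.1 c1.1 c0.2 c1.2 a.
Proof.
elim: l t => [|[c0 a] l IH] [|t] //= [step tr] lt_t; last exact: IH.
by case: l lt_t step {IH tr}.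
Qed.

Lemma run_trace i st j st' v s : run i st j st' v s ->
  exists l, [/\ trace l (st', j), head_conf l (st', j) = (st, i),
                v = flatten [seq oword x.2 | x <- l] & s = [seq x.1.2 | x <- l]].
Proof.
elim=> [i0 st0 | i0 st0 i1 st1 a j0 st2 v0 s0 step _ [l [tr Ehead -> ->]]].
  by exists [::].
by exists (((st0, i0), a) :: l); rewrite /= Ehead.
Qed.

Lemma runs_glue (stk : nat -> seq Gamma) (iz : nat -> 'I_n) (v : nat -> seq Sigma)
    (s : nat -> seq 'I_n) :
  (forall m, run (iz m) (stk m) (iz m.+1) (stk m.+1) (v m) (iz m :: s m)) ->
  exists (st : nat -> seq Gamma) (q : nat -> 'I_n) (b : nat -> option Sigma)
         (W : nat -> seq (seq Sigma)),
    [/\ st 0 = stk 0, q 0 = iz 0,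
        forall t, MF (st t) (st t.+1) (q t) (q t.+1) (b t),
        omega_concat (fun m => iz m :: s m) q &
        [/\ omega_concat W (fun t => oword (b t)), forall m, 0 < size (W m)
          & forall m, flatten (W m) = v m]].
Proof.
move=> runs; have [L HL] := functional_choice _ (fun m => run_trace (runs m)).
have L_gt0 m : 0 < size (L m).
  by have [_ _ _ /(congr1 size)] := HL m; rewrite size_map => <-.
have glued M : trace (cat_upto L M) (stk M, iz M) /\
                head_conf (cat_upto L M) (stk M, iz M) = (stk 0, iz 0).
  elim: M => [|M [tr Ehead]] //; have [trM EheadM _ _] := HL M.
  by rewrite cat_uptoS head_conf_cat EheadM; split=> //; apply: trace_cat trM EheadM.
pose d := ((stk 0, iz 0), @None Sigma).
have Lg := omega_concat_glue d L_gt0; set g := fun t => _ in Lg.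
exists (fun t => (g t).1.1), (fun t => (g t).1.2), (fun t => (g t).2),
       (fun m => [seq oword x.2 | x <- L m]).
have g0 : (g 0).1 = (stk 0, iz 0).
  have [_] := glued 1; rewrite /g /head_conf.
  by case: (cat_upto L 1) (size_cat_upto 1 L_gt0).
split; try by rewrite g0.
- move=> t; have lt_t : t.+1 < size (cat_upto L t.+2) by apply: size_cat_upto.
  have := trace_nth d (glued t.+2).1 lt_t.
  rewrite (omega_concat_nth d Lg (esym (cats0 _)) lt_t).
  by rewrite (omega_concat_nth d Lg (esym (cats0 _)) (ltnW lt_t)); case: (g t).
- apply: (eq_omega_concat (omega_concat_map (fun x : conf * option Sigma => x.1.2) Lg)) => m.
  by have [_ _ _ ->] := HL m.
split=> [|m|m]; first exact: (omega_concat_map (fun x : conf * option Sigma => oword x.2) Lg).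
  by rewrite size_map.
by have [_ _ -> _] := HL m.
Qed.

Lemma gram_inf_beh_inf w : gram_inf A w -> beh_inf A w.
Proof.
move=> [alpha [iz [qz [wd [s [jseq [Z0_prod [Z_prods [ders [Hw [Hj Hbuchi]]]]]]]]]]].
have [a [HI Eqz0 Ewd0 _]] := prodZ0_lderiv Z0_prod (ders 0).
have [P HP] := functional_choice _ (fun m => prodZ_lderiv_run (Z_prods m) (ders m.+1)).
(* [R m] is the stack below [qz m], left over by the earlier segments. *)
pose R := fix R m := if m is m'.+1 then P m' ++ R m' else [::].
have [st [q [b [W [E0 Eq0 steps Hq [HW W_gt0 EW]]]]]] :=
  runs_glue (stk := fun m => qz m :: R m) (v := fun m => wd m.+1) (s := fun m => s m.+1)
            (fun m => HP m (R m)).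
exists a, st, q, b; split; first by rewrite Eq0.
split; first by rewrite E0 Eqz0.
split; first exact: steps.
have Ejq : jseq =1 q.
  by apply: (omega_concat_uniq Hj); apply: (eq_omega_concat (omega_concat_rotate Hq)) => -[].
split=> [N | ]; first by have [t [lt_Nt]] := Hbuchi N.+1; exists t; rewrite -Ejq.
have Wa_gt0 m : 0 < size (scons [:: oword a] W m) by case: m.
apply: (omega_concat_flatten Wa_gt0 (omega_concat_scons (oword a) HW)).1.
by apply: (eq_omega_concat Hw) => -[|m] /=; rewrite ?Ewd0 ?cats0 ?EW.
Qed.

Section InfiniteRun.
Variables (st : nat -> seq Gamma) (q : nat -> 'I_n) (b : nat -> option Sigma).
Hypothesis steps : forall t, MF (st t) (st t.+1) (q t) (q t.+1) (b t).

Definition low_point t := forall t', t <= t' -> size (st t) <= size (st t').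

Definition next_low t t1 :=
  [/\ t < t1, low_point t1 & forall t', t < t' < t1 -> size (st t1) < size (st t')].

Lemma stack_nonempty t : 0 < size (st t).
Proof. by have [p [pi [pi' [-> _]]]] := steps t. Qed.

Lemma exists_next_low t : exists t1, next_low t t1.
Proof.
have [t1 [lt_tt1 min_t1 first_t1]] := first_min_after (fun t => size (st t)) t.
by exists t1; split=> // t' le_t1t'; apply: min_t1; apply: leq_trans le_t1t'.
Qed.

Lemma low_point_chain : low_point 0 ->
  exists T : nat -> nat, T 0 = 0 /\ forall m, low_point (T m) /\ next_low (T m) (T m.+1).
Proof.
move=> low0; have [f Hf] := functional_choice _ exists_next_low.
exists (fun m => iter m f 0); split=> // m; split; last exact: Hf.
by case: m => //= m; have [] := Hf (iter m f 0).
Qed.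

Lemma run_above a k S x : st a = x ++ S ->
  (forall i, i < k -> size S < size (st (a + i))) ->
  exists x', st (a + k) = x' ++ S /\
    run (q a) x (q (a + k)) x'
        (flatten [seq oword (b t) | t <- iota a k]) [seq q t | t <- iota a k].
Proof.
elim: k a x => [|k IH] a x Ea above.
  by exists x; rewrite addn0; split=> //; apply: run0.
have [p [pi [R [Est [Est1 M]]]]] := steps a.
case: x Ea => [|p' x] Ea.
  by have := above 0 isT; rewrite addn0 Ea ltnn.
rewrite Ea in Est; case: Est => Ep ER; subst p' R.
have Ea1 : st a.+1 = (pi ++ x) ++ S by rewrite Est1 catA.
have above1 i : i < k -> size S < size (st (a.+1 + i)).
  by move=> lt_ik; rewrite addSnnS; apply: above.
have [x' [Ex' r]] := IH a.+1 (pi ++ x) Ea1 above1.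
exists x'; rewrite -addSnnS; split=> //.
by apply: runS r; exists p, pi, x.
Qed.

Lemma run_to_next_low t t1 : next_low t t1 ->
  exists x, st t.+1 = x ++ st t1 /\
    run (q t.+1) x (q t1) [::] (flatten [seq oword (b t') | t' <- iota t.+1 (t1 - t.+1)])
        [seq q t' | t' <- iota t.+1 (t1 - t.+1)].
Proof.
move=> [lt_tt1 low_t1 above].
have le_t1 : size (st t1) <= size (st t.+1).
  case: (ltnP t.+1 t1) => [lt_t1 | ge_t1]; first by rewrite ltnW // above ?ltnSn.
  by have -> : t1 = t.+1 by apply/eqP; rewrite eqn_leq ge_t1.
set d := size (st t.+1) - size (st t1); set S := drop d (st t.+1).
have size_S : size S = size (st t1) by rewrite size_drop subKn.
have above' i : i < t1 - t.+1 -> size S < size (st (t.+1 + i)).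
  by move=> lt_i; rewrite size_S above // ltnS leq_addr -ltn_subRL.
have [x' [Ex' r]] := run_above (esym (cat_take_drop d (st t.+1))) above'.
rewrite subnKC // in Ex' r.
have x'_nil : x' = [::].
  apply: size0nil; apply/eqP; rewrite -(eqn_add2r (size S)) -size_cat.
  by rewrite -[x' ++ _]Ex' size_S.
rewrite x'_nil /= in Ex' r.
by exists (take d (st t.+1)); rewrite Ex' cat_take_drop.
Qed.

Lemma next_low_production t t1 : low_point t -> next_low t t1 ->
  exists alpha,
    prodZ (ZT (q t) (head (p0 A) (st t))) alpha (ZT (q t1) (head (p0 A) (st t1))) /\
    lderiv alpha (map Ter (flatten [seq oword (b t') | t' <- iota t (t1 - t)]))
                 [seq q t' | t' <- iota t.+1 (t1 - t.+1)].
Proof.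
move=> low_t next; have [lt_tt1 _ _] := next.
have [x [Ex r]] := run_to_next_low next.
have [ms [size_ms head_ms der]] := run_lderiv_chain r.
have [p [pi [R [Est [Est1 M]]]]] := steps t.
have lt_RS : size R < size (st t1).
  by have := low_t t1 (ltnW lt_tt1); rewrite Est.
have [[|pj ps2] [ES Epi]] := cat_eq_split (etrans (esym Ex) Est1) lt_RS.
  by rewrite ES ltnn in lt_RS.
exists (oterm A (b t) ++ map NT (chainX ms x (q t1))); split.
  by exists (b t), ms, x, (q t1), pj, ps2; rewrite Est ES /= head_ms -Epi.
have -> : t1 - t = (t1 - t.+1).+1 by rewrite subnSK.
by have := lderiv_frame (oword (b t)) [::] der; rewrite !cats0 map_cat.
Qed.

End InfiniteRun.

Lemma beh_inf_gram_inf w : beh_inf A w -> gram_inf A w.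
Proof.
move=> [a [st [q [b [HI [E0 [steps [Hbuchi Hw]]]]]]]].
have low0 : low_point st 0 by move=> t' _; rewrite E0; apply: stack_nonempty steps t'.
have [T [T0 HT]] := low_point_chain low0.
have T_lt m : T m < T m.+1 by have [_ []] := HT m.
have [al Hal] :=
  functional_choice _ (fun m => next_low_production steps (HT m).1 (HT m).2).
pose bw m := blocks (fun t => oword (b t)) T m.
exists (scons (oterm A a) al), (fun m => q (T m)), (fun m => head (p0 A) (st (T m))),
  (scons (oword a) (fun m => flatten (bw m))),
  (scons [::] (fun m => [seq q t | t <- iota (T m).+1 (T m.+1 - (T m).+1)])), q.
split; first by exists (q 0), a; rewrite T0 E0.
split; first by move=> m; have [] := Hal m.
split; first by case=> [|m]; [apply: lderiv_refl | have [] := Hal m].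
split.
  have bwa_gt0 m : 0 < size (scons [:: oword a] bw m).
    by case: m => // m; rewrite /= /bw /blocks size_map size_iota subn_gt0.
  have bw_w := omega_concat_scons (oword a) (omega_concat_blocks (fun t => oword (b t)) T0 T_lt).
  apply: (eq_omega_concat ((omega_concat_flatten bwa_gt0 bw_w).2 Hw)).
  by case=> //=; rewrite cats0.
split.
  apply: (eq_omega_concat (omega_concat_rotate (eq_omega_concat (omega_concat_blocks q T0 T_lt)
                                                                (fun m => blocksE q (T_lt m))))).
  by case.
by move=> N; have [t [lt_Nt lt_l]] := Hbuchi N; exists t; rewrite ltnW.
Qed.

End Automaton.

Theorem corollary15 (Sigma Gamma : finType) (A : pda Sigma Gamma) :
  pda_wf A ->
  forall w : word Sigma, gram_lang A w <-> behaviour A w.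
Proof.
move=> _ [u | v] /=.
  by split; [apply: gram_fin_beh_fin | apply: beh_fin_gram_fin].
by split; [apply: gram_inf_beh_inf | apply: beh_inf_gram_inf].
Qed.
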